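(* For every amalgamation try $\mathbf{x}$, $\mathbf{j}_{\mathbf{x},1}(G_{\mathbf{x},1}) \cap \mathbf{j}_{\mathbf{x},2}(G_{\mathbf{x},2}) = \mathbf{j}_{\mathbf{x},0}(G_{\mathbf{x},0})$.
   Context: A group is locally finite if every finitely generated subgroup is finite. An amalgamation try is a quintuple $\mathbf{x} = (G_0,G_1,G_2,\mathbf{I}_1,\mathbf{I}_2)$, written $G_{\mathbf{x},\ell} = G_\ell$, $\mathbf{I}_{\mathbf{x},\ell} = \mathbf{I}_\ell$, such that: $G_1, G_2$ are locally finite groups and $G_0$ is a subgroup of both; for $\ell = 1,2$, $\mathbf{I}_\ell \subseteq G_\ell$ is a set of representatives of the left cosets of $G_0$ in $G_\ell$ (without repetitions); and $e \in \mathbf{I}_1 \cap \mathbf{I}_2$. Let $\mathcal{U}_{\mathbf{x}} = \{(g_0,g_1,g_2) : g_0 \in G_0, g_1 \in \mathbf{I}_1, g_2 \in \mathbf{I}_2\}$. For $g \in G_\ell$ define $\mathbf{j}_{\mathbf{x},\ell}(g) : \mathcal{U}_{\mathbf{x}} \to \mathcal{U}_{\mathbf{x}}$, $(g_0,g_1,g_2) \mapsto (g_0',g_1',g_2')$: for $\ell = 0$: $(g_0g,g_1,g_2)$; for $\ell = 1$: $g_2' = g_2$ and $(g_1',g_0') \in \mathbf{I}_1 \times G_0$ is unique with $g_1' g_0' = g_1 g_0 g$ in $G_1$; for $\ell = 2$: $g_1' = g_1$ and $(g_2',g_0') \in \mathbf{I}_2 \times G_0$ is unique with $g_2' g_0'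 = g_2 g_0 g$ in $G_2$. Permutations act on the right (product $f_1f_2$ is $u \mapsto f_2(f_1(u))$), and $G_{\mathbf{x}}$ is the permutation group on $\mathcal{U}_{\mathbf{x}}$ generated by $\mathbf{j}_{\mathbf{x},1}(G_1) \cup \mathbf{j}_{\mathbf{x},2}(G_2)$; the maps $\mathbf{j}_{\mathbf{x},\ell}$ are group embeddings into $G_{\mathbf{x}}$ (for $\ell=0$ via $\mathbf{j}_{\mathbf{x},0} = \mathbf{j}_{\mathbf{x},1}\restriction G_0$). *)

From Stdlib Require Import List ClassicalEpsilon.


Record group := Group {
  carrier :> Type;
  gmul : carrier -> carrier -> carrier;
  gone : carrier;
  ginv : carrier -> carrier;
  gmulA : forall a b c, gmul a (gmul b c) = gmul (gmul a b) c;
  gmul1g : forall a, gmul gone a = a;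
  gmulg1 : forall a, gmul a gone = a;
  gmulVg : forall a, gmul (ginv a) a = gone;
  gmulgV : forall a, gmul a (ginv a) = gone
}.

Inductive generated (G : group) (s : list G) : G -> Prop :=
  | gen_in x : In x s -> @generated G s x
  | gen_one : @generated G s (gone G)
  | gen_mul x y : @generated G s x -> @generated G s y -> @generated G s (gmul G x y)
  | gen_inv x : @generated G s x -> @generated G s (ginv G x).

Definition locally_finite (G : group) : Prop :=
  forall s : list G, exists l : list G, forall x : G, @generated G s x -> In x l.

Definition embedding (G0 G : group) (i : G0 -> G) : Prop :=
  (forall a b, i (gmul G0 a b) = gmul G (i a) (i b)) /\
  (forall a b, i a = i b -> a = b).

Definition left_transversal (G0 G : group) (i : G0 -> G) (I : G -> Prop) : Prop :=
  (forall g : G, exists a h, I a /\ g = gmul G a (i h)) /\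
  (forall a a' h h', I a -> I a' -> gmul G a (i h) = gmul G a' (i h') ->
       a = a' /\ h = h').

Record amalgamation_try := AmalgTry {
  G0 : group; G1 : group; G2 : group;
  emb1 : G0 -> G1; emb2 : G0 -> G2;
  emb1P : embedding G0 G1 emb1; emb2P : embedding G0 G2 emb2;
  lf1 : locally_finite G1; lf2 : locally_finite G2;
  I1 : G1 -> Prop; I2 : G2 -> Prop;
  I1P : left_transversal G0 G1 emb1 I1; I2P : left_transversal G0 G2 emb2 I2;
  e_I1 : I1 (gone G1); e_I2 : I2 (gone G2)
}.

Section Construction.
Variable x : amalgamation_try.

Definition U := { t : (G0 x * G1 x * G2 x)%type | I1 x (snd (fst t)) /\ I2 x (snd t) }.

Lemma dec1_ex (g : G1 x) :
  exists p : (G1 x * G0 x)%type, I1 x (fst p) /\ g = gmul _ (fst p) (emb1 x (snd p)).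
Proof. destruct (proj1 (I1P x) g) as [a [h [Ha E]]]. exists (a, h). auto. Qed.

Lemma dec2_ex (g : G2 x) :
  exists p : (G2 x * G0 x)%type, I2 x (fst p) /\ g = gmul _ (fst p) (emb2 x (snd p)).
Proof. destruct (proj1 (I2P x) g) as [a [h [Ha E]]]. exists (a, h). auto. Qed.

(* the unique decomposition g = g' * g0' with g' in I_l, g0' in G0 *)
Definition dec1 (g : G1 x) : (G1 x * G0 x)%type :=
  proj1_sig (constructive_indefinite_description _ (dec1_ex g)).
Definition dec2 (g : G2 x) : (G2 x * G0 x)%type :=
  proj1_sig (constructive_indefinite_description _ (dec2_ex g)).

Lemma dec1_I g : I1 x (fst (dec1 g)).
Proof. unfold dec1; destruct (constructive_indefinite_description _ _) as [p Hp]; exact (proj1 Hp). Qed.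
Lemma dec2_I g : I2 x (fst (dec2 g)).
Proof. unfold dec2; destruct (constructive_indefinite_description _ _) as [p Hp]; exact (proj1 Hp). Qed.

Definition mkU (a0 : G0 x) (a1 : G1 x) (a2 : G2 x) (h1 : I1 x a1) (h2 : I2 x a2) : U :=
  exist _ (a0, a1, a2) (conj h1 h2).

(* j_{x,1}(g) : (g0,g1,g2) |-> (g0',g1',g2) with g1' g0' = g1 g0 g *)
Definition j1 (g : G1 x) (u : U) : U :=
  let t := proj1_sig u in
  let p := dec1 (gmul _ (gmul _ (snd (fst t)) (emb1 x (fst (fst t)))) g) in
  mkU (snd p) (fst p) (snd t) (dec1_I _) (proj2 (proj2_sig u)).

(* j_{x,2}(g) : (g0,g1,g2) |-> (g0',g1,g2') with g2' g0' = g2 g0 g *)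
Definition j2 (g : G2 x) (u : U) : U :=
  let t := proj1_sig u in
  let p := dec2 (gmul _ (gmul _ (snd t) (emb2 x (fst (fst t)))) g) in
  mkU (snd p) (snd (fst t)) (fst p) (proj1 (proj2_sig u)) (dec2_I _).

Definition j0 (g : G0 x) : U -> U := j1 (emb1 x g).

End Construction.

(** Each [j1 g] and each [j2 g] with [g] coming from [G0] multiplies the
    [G0]-coordinate on the right and fixes the transversal coordinates, so
    [j0 g0] lies in both images.  Conversely, if [j1 g1 = j2 g2], evaluate at the
    base point [(e, e, e)]: [j1 g1] moves its [I1]-coordinate to the
    [I1]-representative of [g1 G0], while [j2 g2] keeps it equal to [e]; hence
    that representative is [e], i.e. [g1] lies in [G0] and [j1 g1] is [j0] of it. *)

From Stdlib Require Import FunctionalExtensionality ProofIrrelevance.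

Lemma gmul_idem_one (G : group) (a : G) : gmul G a a = a -> a = gone G.
Proof.
  intro Eaa.
  rewrite <- (gmul1g G a), <- (gmulVg G a), <- gmulA, Eaa at 1.
  now rewrite gmulVg.
Qed.

Lemma embedding_one (H G : group) (i : H -> G) :
  embedding H G i -> i (gone H) = gone G.
Proof.
  intros [i_mul _]; apply gmul_idem_one.
  now rewrite <- i_mul, gmul1g.
Qed.

Section Amalgamation.
Variable x : amalgamation_try.

Lemma U_val_inj (u v : U x) : proj1_sig u = proj1_sig v -> u = v.
Proof.
  destruct u as [t p], v as [t' p']; simpl; intros ->.
  f_equal; apply proof_irrelevance.
Qed.

Lemma dec1_spec g : g = gmul _ (fst (dec1 x g)) (emb1 x (snd (dec1 x g))).
Proof.
  unfold dec1; destruct (ClassicalEpsilon.constructive_indefinite_description _ _) as [p Hp].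
  exact (proj2 Hp).
Qed.

Lemma dec2_spec g : g = gmul _ (fst (dec2 x g)) (emb2 x (snd (dec2 x g))).
Proof.
  unfold dec2; destruct (ClassicalEpsilon.constructive_indefinite_description _ _) as [p Hp].
  exact (proj2 Hp).
Qed.

Lemma dec1_mul_emb1 a h : I1 x a -> dec1 x (gmul _ a (emb1 x h)) = (a, h).
Proof.
  intro Ia.
  destruct (proj2 (I1P x) _ _ _ _ Ia (dec1_I x _) (dec1_spec (gmul _ a (emb1 x h))))
    as [Ea Eh].
  destruct (dec1 x _); simpl in *; now subst.
Qed.

Lemma dec2_mul_emb2 a h : I2 x a -> dec2 x (gmul _ a (emb2 x h)) = (a, h).
Proof.
  intro Ia.
  destruct (proj2 (I2P x) _ _ _ _ Ia (dec2_I x _) (dec2_spec (gmul _ a (emb2 x h))))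
    as [Ea Eh].
  destruct (dec2 x _); simpl in *; now subst.
Qed.

Lemma j1_emb1 g0 (u : U x) :
  proj1_sig (j1 x (emb1 x g0) u) =
  (gmul _ (fst (fst (proj1_sig u))) g0, snd (fst (proj1_sig u)), snd (proj1_sig u)).
Proof.
  destruct u as [[[a0 a1] a2] [I1a1 I2a2]]; unfold j1; simpl.
  now rewrite <- gmulA, <- (proj1 (emb1P x)), dec1_mul_emb1.
Qed.

Lemma j2_emb2 g0 (u : U x) :
  proj1_sig (j2 x (emb2 x g0) u) =
  (gmul _ (fst (fst (proj1_sig u))) g0, snd (fst (proj1_sig u)), snd (proj1_sig u)).
Proof.
  destruct u as [[[a0 a1] a2] [I1a1 I2a2]]; unfold j2; simpl.
  now rewrite <- gmulA, <- (proj1 (emb2P x)), dec2_mul_emb2.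
Qed.

Lemma j2_emb2_eq_j0 g0 : j2 x (emb2 x g0) = j0 x g0.
Proof.
  apply functional_extensionality; intro u; apply U_val_inj.
  unfold j0; now rewrite j1_emb1, j2_emb2.
Qed.

Definition base_point : U x := mkU x (gone _) (gone _) (gone _) (e_I1 x) (e_I2 x).

Lemma j1_base_point g :
  proj1_sig (j1 x g base_point) = (snd (dec1 x g), fst (dec1 x g), gone _).
Proof.
  unfold j1; simpl.
  now rewrite (embedding_one _ _ _ (emb1P x)), gmulg1, gmul1g.
Qed.

Lemma j2_base_point g :
  proj1_sig (j2 x g base_point) = (snd (dec2 x g), gone _, fst (dec2 x g)).
Proof.
  unfold j2; simpl.
  now rewrite (embedding_one _ _ _ (emb2P x)), gmulg1, gmul1g.
Qed.

Lemma j1_eq_j2_in_G0 g1 g2 :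
  j1 x g1 = j2 x g2 -> g1 = emb1 x (snd (dec1 x g1)).
Proof.
  intro E.
  assert (Ebase := f_equal (fun f => proj1_sig (f base_point)) E); cbv beta in Ebase.
  rewrite j1_base_point, j2_base_point in Ebase.
  injection Ebase as _ rep_one _.
  rewrite (dec1_spec g1) at 1.
  now rewrite rep_one, gmul1g.
Qed.

End Amalgamation.

Theorem claim2p4 (x : amalgamation_try) (f : U x -> U x) :
  ((exists g1 : G1 x, j1 x g1 = f) /\ (exists g2 : G2 x, j2 x g2 = f)) <->
  (exists g0 : G0 x, j0 x g0 = f).
Proof.
  split.
  - intros [[g1 E1] [g2 E2]].
    exists (snd (dec1 x g1)); unfold j0.
    rewrite <- (j1_eq_j2_in_G0 x _ _ (eq_trans E1 (eq_sym E2))).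
    exact E1.
  - intros [g0 E]; split.
    + now exists (emb1 x g0).
    + exists (emb2 x g0); now rewrite j2_emb2_eq_j0.
Qed.
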